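(* Let $(G,+)$ be a metrizable abelian topological group and $\phi:G\to G$, $\phi(x)=-x$. Then the abstract HNN extension $H=\langle G,t\mid txt^{-1}=-x,\ x\in G\rangle$ admits a metrizable SIN group topology extending the topology of $G$ (i.e. with $G$ a topological subgroup of $H$).
   Context: A topological group is SIN if every neighborhood of the identity contains a neighborhood $V$ of the identity with $gVg^{-1}=V$ for all $g$. *)

From Stdlib Require Import Reals.
Local Open Scope R_scope.

Record Group : Type := {
  gcar :> Type;
  gmul : gcar -> gcar -> gcar;
  ginv : gcar -> gcar;
  gone : gcar;
  gmul_assoc : forall x y z, gmul x (gmul y z) = gmul (gmul x y) z;
  gmul_1l : forall x, gmul gone x = x;
  gmul_Vl : forall x, gmul (ginv x) x = gone
}.

Arguments gmul {g}.
Arguments ginv {g}.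
Arguments gone {g}.

Definition abelian (G : Group) : Prop := forall x y : G, gmul x y = gmul y x.

Definition is_hom (G K : Group) (f : G -> K) : Prop :=
  forall x y : G, f (gmul x y) = gmul (f x) (f y).

(** Abstract HNN extension H = < G, t | t x t^-1 = phi x (x in G) >,
    phi an automorphism of G, characterised by the universal property of
    the presentation: iota : G -> H is a homomorphism, the relations hold,
    and for every group K, every homomorphism f : G -> K and every k in K
    with k f(x) k^-1 = f(phi x), there is a unique homomorphism h : H -> K
    with h o iota = f and h t = k. *)
Definition is_HNN_extension (G H : Group) (phi : G -> G)
    (iota : G -> H) (t : H) : Prop :=
  is_hom G H iota /\
  (forall x : G, gmul (gmul t (iota x)) (ginv t) = iota (phi x)) /\
  (forall (K : Group) (f : G -> K) (k : K),
     is_hom G K f ->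
     (forall x : G, gmul (gmul k (f x)) (ginv k) = f (phi x)) ->
     exists h : H -> K,
       is_hom H K h /\ (forall x : G, h (iota x) = f x) /\ h t = k /\
       (forall h' : H -> K, is_hom H K h' -> (forall x : G, h' (iota x) = f x) ->
          h' t = k -> forall y : H, h' y = h y)).

Definition is_topology (X : Type) (op : (X -> Prop) -> Prop) : Prop :=
  op (fun _ => True) /\
  (forall U V, op U -> op V -> op (fun x => U x /\ V x)) /\
  (forall F : (X -> Prop) -> Prop, (forall U, F U -> op U) ->
     op (fun x => exists U, F U /\ U x)).

Definition prod_open (X Y : Type) (opX : (X -> Prop) -> Prop)
    (opY : (Y -> Prop) -> Prop) (W : X * Y -> Prop) : Prop :=
  forall p, W p -> exists A B, opX A /\ opY B /\ A (fst p) /\ B (snd p) /\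
     (forall x y, A x -> B y -> W (x, y)).

Definition continuous (X Y : Type) (opX : (X -> Prop) -> Prop)
    (opY : (Y -> Prop) -> Prop) (f : X -> Y) : Prop :=
  forall V, opY V -> opX (fun x => V (f x)).

Definition is_topological_group (G : Group) (op : (G -> Prop) -> Prop) : Prop :=
  is_topology G op /\
  continuous (G * G) G (prod_open G G op op) op (fun p => gmul (fst p) (snd p)) /\
  continuous G G op op (fun x => ginv x).

Definition is_metric (X : Type) (d : X -> X -> R) : Prop :=
  (forall x y, 0 <= d x y) /\ (forall x y, d x y = 0 <-> x = y) /\
  (forall x y, d x y = d y x) /\ (forall x y z, d x z <= d x y + d y z).

Definition metrizable (X : Type) (op : (X -> Prop) -> Prop) : Prop :=
  exists d : X -> X -> R, is_metric X d /\
    forall U, op U <-> (forall x, U x -> exists eps, 0 < eps /\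
                          forall y, d x y < eps -> U y).

Definition nbhd1 (G : Group) (op : (G -> Prop) -> Prop) (N : G -> Prop) : Prop :=
  exists U, op U /\ U gone /\ forall x, U x -> N x.

Definition is_SIN_group (G : Group) (op : (G -> Prop) -> Prop) : Prop :=
  forall N, nbhd1 G op N ->
    exists V, nbhd1 G op V /\ (forall x, V x -> N x) /\
      forall (g : G) (y : G),
        (exists v, V v /\ y = gmul (gmul g v) (ginv g)) <-> V y.

(* For abelian G the inversion is an
   automorphism of order two, so ℤ acts on G by (m, x) |-> (-1)^m x and we may
   form the semidirect product S = G ⋊ ℤ.  The universal property of H gives a
   homomorphism h : H -> S with h (iota x) = (x, 0) and h t = (1, 1), and the
   map (x, m) |-> iota x * t^m is a left inverse of it, so h is injective.

   S carries the metric d((x,m),(y,n)) = d_G(x,y) + [m <> n], for which the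
   group operations are ε-δ continuous (the action of ℤ is by homeomorphisms)
   and the sets {(x,0) | d_G(1,x) < ε, d_G(1,x^-1) < ε} form a basis of
   conjugation-invariant neighbourhoods of 1 (conjugation only changes signs).
   Pulling this metric back along h makes H a metrizable SIN group in which
   iota is an isometry onto a uniformly separated subset, hence a topological
   embedding. *)

From Stdlib Require Import Reals Lra Lia ZArith.

Infix "**" := gmul (at level 40, left associativity).

Lemma mulVr (K : Group) (x : K) : x ** ginv x = gone.
Proof.
  rewrite <- (gmul_1l K (x ** ginv x)).
  rewrite <- (gmul_Vl K (ginv x)) at 1.
  rewrite <- gmul_assoc, (gmul_assoc K (ginv x) x), gmul_Vl, gmul_1l.
  apply gmul_Vl.
Qed.

Lemma mul1r (K : Group) (x : K) : x ** gone = x.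
Proof. rewrite <- (gmul_Vl K x), gmul_assoc, mulVr, gmul_1l. reflexivity. Qed.

Lemma mulKV (K : Group) (x y : K) : ginv x ** (x ** y) = y.
Proof. rewrite gmul_assoc, gmul_Vl, gmul_1l. reflexivity. Qed.

Lemma inv_uniq (K : Group) (x y : K) : x ** y = gone -> y = ginv x.
Proof. intros E. rewrite <- (mulKV K x y), E, mul1r. reflexivity. Qed.

Lemma invK (K : Group) (x : K) : ginv (ginv x) = x.
Proof. symmetry. apply inv_uniq. apply gmul_Vl. Qed.

Lemma inv1 (K : Group) : ginv (@gone K) = gone.
Proof. symmetry. apply inv_uniq. apply gmul_1l. Qed.

Lemma invM (K : Group) (x y : K) : ginv (x ** y) = ginv y ** ginv x.
Proof.
  symmetry. apply inv_uniq.
  rewrite gmul_assoc, <- (gmul_assoc K x y), mulVr, mul1r, mulVr. reflexivity.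
Qed.

Lemma mul_cancel_l (K : Group) (a x y : K) : a ** x = a ** y -> x = y.
Proof. intros E. rewrite <- (mulKV K a x), E, mulKV. reflexivity. Qed.

Lemma hom1 (K L : Group) (f : K -> L) : is_hom K L f -> f gone = gone.
Proof.
  intros Hf. apply (mul_cancel_l L (f gone)).
  rewrite <- Hf, gmul_1l, mul1r. reflexivity.
Qed.

Lemma homV (K L : Group) (f : K -> L) :
  is_hom K L f -> forall x, f (ginv x) = ginv (f x).
Proof.
  intros Hf x. apply inv_uniq. rewrite <- Hf, mulVr. apply (hom1 K L f Hf).
Qed.

(** A set invariant under all conjugations, [V y <-> exists v, V v /\ y = g v g^-1];
    this is the form of normality required by [is_SIN_group]. *)
Definition conj_invariant (K : Group) (V : K -> Prop) : Prop :=
  forall g v : K, V v -> V (g ** v ** ginv g).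

Lemma conj_invariant_image (K : Group) (V : K -> Prop) :
  conj_invariant K V ->
  forall g y : K, (exists v, V v /\ y = g ** v ** ginv g) <-> V y.
Proof.
  intros HV g y. split.
  - intros [v [Vv ->]]. apply HV, Vv.
  - intros Vy. exists (ginv g ** y ** ginv (ginv g)). split; [apply HV, Vy|].
    rewrite invK, !gmul_assoc, mulVr, gmul_1l, <- gmul_assoc, mulVr, mul1r.
    reflexivity.
Qed.

Definition zpow (K : Group) (k : K) (m : Z) : K :=
  match m with
  | Z0 => gone
  | Zpos p => Pos.iter (fun y => y ** k) gone p
  | Zneg p => Pos.iter (fun y => y ** ginv k) gone p
  end.

Lemma zpow_succ (K : Group) (k : K) m : zpow K k (Z.succ m) = zpow K k m ** k.
Proof.
  destruct m as [|p|p].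
  - reflexivity.
  - replace (Z.succ (Zpos p)) with (Zpos (Pos.succ p)) by lia. simpl.
    rewrite Pos.iter_succ. reflexivity.
  - destruct (Pos.succ_pred_or p) as [->|E].
    + simpl. rewrite gmul_1l, gmul_Vl. reflexivity.
    + rewrite <- E.
      replace (Z.succ (Zneg (Pos.succ (Pos.pred p)))) with (Zneg (Pos.pred p)) by lia.
      simpl. rewrite Pos.iter_succ, <- gmul_assoc, gmul_Vl, mul1r. reflexivity.
Qed.

Lemma zpow_pred (K : Group) (k : K) m : zpow K k (Z.pred m) = zpow K k m ** ginv k.
Proof.
  rewrite <- (Z.succ_pred m) at 2. rewrite zpow_succ, <- gmul_assoc, mulVr, mul1r.
  reflexivity.
Qed.

Lemma zpow_add (K : Group) (k : K) m n :
  zpow K k (m + n) = zpow K k m ** zpow K k n.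
Proof.
  induction n using Z.peano_ind.
  - rewrite Z.add_0_r, mul1r. reflexivity.
  - rewrite Z.add_succ_r, !zpow_succ, IHn, gmul_assoc. reflexivity.
  - rewrite Z.add_pred_r, !zpow_pred, IHn, gmul_assoc. reflexivity.
Qed.

(** * The semidirect product G ⋊ ℤ, ℤ acting by signs *)

Definition sgn (G : Group) (m : Z) (y : G) : G := if Z.odd m then ginv y else y.

Lemma sgnM (G : Group) (Hab : abelian G) m (a b : G) :
  sgn G m (a ** b) = sgn G m a ** sgn G m b.
Proof. unfold sgn; destruct (Z.odd m); [rewrite invM; apply Hab | reflexivity]. Qed.

Lemma sgn_sgn (G : Group) m n (z : G) : sgn G m (sgn G n z) = sgn G (m + n) z.
Proof.
  unfold sgn. rewrite Z.odd_add.
  destruct (Z.odd m), (Z.odd n); simpl; rewrite ?invK; reflexivity.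
Qed.

Lemma sgn_succ (G : Group) m (y : G) : sgn G (Z.succ m) y = sgn G m (ginv y).
Proof.
  unfold sgn. rewrite Z.odd_succ, <- Z.negb_odd.
  destruct (Z.odd m); simpl; rewrite ?invK; reflexivity.
Qed.

Lemma sgn_pred (G : Group) m (y : G) : sgn G (Z.pred m) y = sgn G m (ginv y).
Proof. rewrite <- (Z.succ_pred m) at 2. rewrite sgn_succ, invK. reflexivity. Qed.

Definition Smul (G : Group) (p q : G * Z) : G * Z :=
  (fst p ** sgn G (snd p) (fst q), (snd p + snd q)%Z).
Definition Sinv (G : Group) (p : G * Z) : G * Z :=
  (sgn G (snd p) (ginv (fst p)), (- snd p)%Z).
Definition Sone (G : Group) : G * Z := (gone, 0%Z).

Lemma S_assoc (G : Group) (Hab : abelian G) (x y z : G * Z) :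
  Smul G x (Smul G y z) = Smul G (Smul G x y) z.
Proof.
  destruct x as [x m], y as [y n], z as [z k]; unfold Smul; simpl.
  f_equal; [|lia].
  rewrite sgnM, sgn_sgn, gmul_assoc by exact Hab. reflexivity.
Qed.

Lemma S_1l (G : Group) (x : G * Z) : Smul G (Sone G) x = x.
Proof. destruct x as [x m]; unfold Smul, Sone; simpl. rewrite gmul_1l. reflexivity. Qed.

Lemma S_Vl (G : Group) (x : G * Z) : Smul G (Sinv G x) x = Sone G.
Proof.
  destruct x as [x m]; unfold Smul, Sinv, Sone, sgn; simpl. f_equal; [|lia].
  rewrite Z.odd_opp. destruct (Z.odd m); rewrite ?invK; [apply mulVr|apply gmul_Vl].
Qed.

Definition SG (G : Group) (Hab : abelian G) : Group :=
  {| gcar := (G * Z)%type; gmul := Smul G; ginv := Sinv G; gone := Sone G;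
     gmul_assoc := S_assoc G Hab; gmul_1l := S_1l G; gmul_Vl := S_Vl G |}.

Lemma SG_conj (G : Group) (Hab : abelian G) (z x : G) m :
  @gmul (SG G Hab) (@gmul (SG G Hab) (z, m) (x, 0%Z)) (@ginv (SG G Hab) (z, m))
  = (sgn G m x, 0%Z).
Proof.
  simpl. unfold Smul, Sinv; simpl. f_equal; [|lia].
  rewrite sgn_sgn, Z.add_0_r.
  change (sgn G (m + m) (ginv z)) with (if Z.odd (m+m) then ginv (ginv z) else ginv z).
  rewrite Z.odd_add, Bool.xorb_nilpotent. simpl.
  rewrite (Hab z), <- gmul_assoc, mulVr, mul1r. reflexivity.
Qed.

(** * The HNN extension embeds into G ⋊ ℤ *)

Lemma conj_zpow (G H : Group) (iota : G -> H) (t : H) :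
  is_hom G H iota ->
  (forall x : G, t ** iota x ** ginv t = iota (ginv x)) ->
  forall m y, zpow H t m ** iota y = iota (sgn G m y) ** zpow H t m.
Proof.
  intros Hi Hr.
  assert (t_comm : forall y, t ** iota y = iota (ginv y) ** t).
  { intros y. rewrite <- Hr, <- gmul_assoc, gmul_Vl, mul1r. reflexivity. }
  assert (tinv_comm : forall y, ginv t ** iota y = iota (ginv y) ** ginv t).
  { intros y. rewrite <- (invK G y) at 1.
    rewrite <- Hr, !gmul_assoc, gmul_Vl, gmul_1l. reflexivity. }
  intros m. induction m using Z.peano_ind; intros y.
  - unfold sgn; simpl. rewrite gmul_1l, mul1r. reflexivity.
  - rewrite zpow_succ, <- gmul_assoc, t_comm, gmul_assoc, IHm, <- gmul_assoc,
      sgn_succ. reflexivity.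
  - rewrite zpow_pred, <- gmul_assoc, tinv_comm, gmul_assoc, IHm, <- gmul_assoc,
      sgn_pred. reflexivity.
Qed.

(* The universal property yields h : H -> G ⋊ ℤ with h (iota x) = (x, 0); it is
   injective because (x, m) |-> iota x * t^m is a left inverse (both g ∘ h and
   the identity extend iota and fix t, so they agree by uniqueness). *)
Lemma HNN_embedding (G : Group) (Hab : abelian G) (H : Group) (iota : G -> H) (t : H)
  (HHNN : is_HNN_extension G H (fun x => ginv x) iota t) :
  exists h : H -> SG G Hab, is_hom H (SG G Hab) h /\ (forall x, h (iota x) = (x, 0%Z)) /\
    (forall a b, h a = h b -> a = b).
Proof.
  destruct HHNN as [Hi [Hr Hu]].
  destruct (Hu (SG G Hab) (fun x => (x, 0%Z)) (gone, 1%Z)) as [h [Hh [Hhi [Hht _]]]].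
  { intros x y. reflexivity. }
  { intros x. rewrite SG_conj. reflexivity. }
  exists h. split; [exact Hh|]. split; [exact Hhi|].
  set (g := fun p : SG G Hab => iota (fst p) ** zpow H t (snd p)).
  assert (Hg : is_hom (SG G Hab) H g).
  { intros [x m] [y n]. unfold g; simpl. unfold Smul; simpl.
    rewrite zpow_add, Hi, !gmul_assoc. f_equal.
    rewrite <- !gmul_assoc. f_equal. symmetry. apply (conj_zpow G H iota t Hi Hr). }
  assert (g_h : forall y, g (h y) = y).
  { destruct (Hu H iota t Hi Hr) as [h0 [_ [_ [_ Huniq]]]].
    intros y. rewrite (Huniq (fun y => y)), (Huniq (fun y => g (h y))); try reflexivity.
    - intros a b. rewrite Hh, Hg. reflexivity.
    - intros x. rewrite Hhi. unfold g; simpl. apply mul1r.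
    - rewrite Hht. unfold g; simpl.
      rewrite gmul_1l, (hom1 G H iota Hi), gmul_1l. reflexivity.
    - intros a b. reflexivity. }
  intros a b E. rewrite <- (g_h a), <- (g_h b), E. reflexivity.
Qed.

Open Scope R_scope.

Definition metric_open (X : Type) (d : X -> X -> R) (U : X -> Prop) : Prop :=
  forall x, U x -> exists eps, 0 < eps /\ forall y, d x y < eps -> U y.

Lemma metric_open_topology (X : Type) (d : X -> X -> R) :
  is_topology X (metric_open X d).
Proof.
  split; [|split].
  - intros a _. exists 1. split; [lra|]. auto.
  - intros U V HU HV a [Ua Va].
    destruct (HU a Ua) as [e1 [He1 P1]]. destruct (HV a Va) as [e2 [He2 P2]].
    exists (Rmin e1 e2). split; [apply Rmin_glb_lt; lra|].
    pose proof (Rmin_l e1 e2). pose proof (Rmin_r e1 e2).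
    intros b Hb. split; [apply P1|apply P2]; lra.
  - intros F HF a [U [FU Ua]]. destruct (HF U FU a Ua) as [e [He P]].
    exists e. split; [exact He|]. intros b Hb. exists U. split; auto.
Qed.

Lemma ball_open (X : Type) (d : X -> X -> R) :
  is_metric X d -> forall x r, metric_open X d (fun y => d x y < r).
Proof.
  intros [_ [_ [_ Htr]]] x r y Hy.
  exists (r - d x y). split; [lra|]. intros z Hz. pose proof (Htr x y z). lra.
Qed.

Lemma metric_open_preimage (X Y : Type) (d : Y -> Y -> R) (f : X -> Y) (V : Y -> Prop) :
  metric_open Y d V -> metric_open X (fun a b => d (f a) (f b)) (fun a => V (f a)).
Proof.
  intros HV a Va. destruct (HV (f a) Va) as [e [He Pe]].
  exists e. split; [exact He|]. intros b Hb. apply Pe, Hb.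
Qed.

Lemma metric_pullback (X Y : Type) (d : Y -> Y -> R) (f : X -> Y) :
  is_metric Y d -> (forall a b, f a = f b -> a = b) ->
  is_metric X (fun a b => d (f a) (f b)).
Proof.
  intros [A1 [A2 [A3 A4]]] Hinj. split; [|split; [|split]]; intros.
  - apply A1.
  - split; intros E; [apply Hinj, A2, E | subst; apply A2; reflexivity].
  - apply A3.
  - apply A4.
Qed.

Definition metric_group (K : Group) (d : K -> K -> R) : Prop :=
  is_metric K d /\
  (forall x y eps, 0 < eps -> exists del, 0 < del /\ forall x' y',
     d x x' < del -> d y y' < del -> d (x ** y) (x' ** y') < eps) /\
  (forall x eps, 0 < eps -> exists del, 0 < del /\ forall x',
     d x x' < del -> d (ginv x) (ginv x') < eps).

Lemma metric_group_of_topological (K : Group) (op : (K -> Prop) -> Prop) d :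
  is_topological_group K op -> is_metric K d ->
  (forall U, op U <-> metric_open K d U) -> metric_group K d.
Proof.
  intros [_ [Hmul Hinv]] Hm Hop.
  assert (Hd0 : forall x, d x x = 0) by (intros; apply Hm; reflexivity).
  split; [exact Hm|split].
  - intros x y eps Heps.
    destruct (Hmul _ (proj2 (Hop _) (ball_open K d Hm (x ** y) eps)) (x, y))
      as [A [B [HA [HB [Ax [By HAB]]]]]].
    { simpl. rewrite Hd0. exact Heps. }
    destruct (proj1 (Hop A) HA x Ax) as [e1 [He1 H1]].
    destruct (proj1 (Hop B) HB y By) as [e2 [He2 H2]].
    exists (Rmin e1 e2). split; [apply Rmin_glb_lt; lra|].
    pose proof (Rmin_l e1 e2). pose proof (Rmin_r e1 e2).
    intros x' y' D1 D2. apply (HAB x' y'); [apply H1|apply H2]; lra.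
  - intros x eps Heps.
    apply (proj1 (Hop _) (Hinv _ (proj2 (Hop _) (ball_open K d Hm (ginv x) eps))) x).
    simpl. rewrite Hd0. exact Heps.
Qed.

Lemma metric_group_topological (K : Group) d :
  metric_group K d -> is_topological_group K (metric_open K d).
Proof.
  intros [Hm [Hmul Hinv]].
  assert (Hd0 : forall x, d x x = 0) by (intros; apply Hm; reflexivity).
  split; [apply metric_open_topology|split].
  - intros V HV [a b] Vab. simpl in Vab.
    destruct (HV _ Vab) as [e [He Pe]].
    destruct (Hmul a b e He) as [del [Hdel Pdel]].
    exists (fun a' => d a a' < del), (fun b' => d b b' < del).
    split; [apply ball_open, Hm|]. split; [apply ball_open, Hm|]. simpl.
    rewrite !Hd0. split; [exact Hdel|]. split; [exact Hdel|].
    intros x y Ax By. apply Pe, Pdel; assumption.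
  - intros V HV a Va.
    destruct (HV _ Va) as [e [He Pe]].
    destruct (Hinv a e He) as [del [Hdel Pdel]].
    exists del. split; [exact Hdel|]. intros b Hb. apply Pe, Pdel, Hb.
Qed.

Lemma metric_group_pullback (K L : Group) (h : K -> L) d :
  is_hom K L h -> (forall a b, h a = h b -> a = b) ->
  metric_group L d -> metric_group K (fun a b => d (h a) (h b)).
Proof.
  intros Hh Hinj [Hm [Hmul Hinv]]. split; [apply metric_pullback; assumption|split].
  - intros x y eps Heps. destruct (Hmul (h x) (h y) eps Heps) as [del [Hdel P]].
    exists del. split; [exact Hdel|]. intros x' y' D1 D2. rewrite !Hh. apply P; assumption.
  - intros x eps Heps. destruct (Hinv (h x) eps Heps) as [del [Hdel P]].
    exists del. split; [exact Hdel|]. intros x' D. rewrite !(homV K L h Hh). apply P, D.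
Qed.

Definition small_invariant_nbhds (K : Group) (d : K -> K -> R) : Prop :=
  forall eps, 0 < eps -> exists V, metric_open K d V /\ V gone /\
    (forall v, V v -> d gone v < eps) /\ conj_invariant K V.

Lemma SIN_of_small_invariant_nbhds (K : Group) d :
  small_invariant_nbhds K d -> is_SIN_group K (metric_open K d).
Proof.
  intros Hsmall N [U [HU [U1 UN]]].
  destruct (HU gone U1) as [eps [Heps Peps]].
  destruct (Hsmall eps Heps) as [V [HV [V1 [Vsmall Vinv]]]].
  exists V. split; [exists V; auto|]. split.
  - intros v Vv. apply UN, Peps, Vsmall, Vv.
  - apply conj_invariant_image, Vinv.
Qed.

Lemma small_invariant_nbhds_pullback (K L : Group) (h : K -> L) d :
  is_hom K L h -> small_invariant_nbhds L d ->
  small_invariant_nbhds K (fun a b => d (h a) (h b)).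
Proof.
  intros Hh Hsmall eps Heps.
  destruct (Hsmall eps Heps) as [V [HV [V1 [Vsmall Vinv]]]].
  exists (fun a => V (h a)). rewrite (hom1 K L h Hh).
  split; [apply metric_open_preimage, HV|]. split; [exact V1|]. split.
  - intros v Vv. apply Vsmall, Vv.
  - intros g v Vv. rewrite !Hh, (homV K L h Hh). apply Vinv, Vv.
Qed.

Lemma isometric_embedding_subspace (X Y : Type) dX dY (f : X -> Y) (r : R) :
  is_metric X dX -> 0 < r ->
  (forall x y, dY (f x) (f y) = dX x y) ->
  (forall x b, dY (f x) b < r -> exists y, b = f y) ->
  forall U, metric_open X dX U <->
    exists W, metric_open Y dY W /\ forall x, U x <-> W (f x).
Proof.
  intros Hm Hr Hiso Hsep U.
  assert (Hinj : forall x y, f x = f y -> x = y).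
  { destruct Hm as [_ [Hzero _]]. intros x y E.
    apply Hzero. rewrite <- Hiso, E, Hiso. apply Hzero. reflexivity. }
  split.
  - intros HU. exists (fun b => exists x, b = f x /\ U x). split.
    + intros b [x [-> Ux]]. destruct (HU x Ux) as [e [He Pe]].
      exists (Rmin e r). split; [apply Rmin_glb_lt; lra|].
      pose proof (Rmin_l e r). pose proof (Rmin_r e r).
      intros b Hb. destruct (Hsep x b) as [y ->]; [lra|].
      exists y. split; [reflexivity|]. apply Pe. rewrite <- Hiso. lra.
    + intros x. split; [intros Ux; exists x; auto|].
      intros [y [E Uy]]. rewrite (Hinj x y E). exact Uy.
  - intros [W [HW HUW]] x Ux.
    destruct (HW (f x) (proj1 (HUW x) Ux)) as [e [He Pe]].
    exists e. split; [exact He|]. intros y Hy. apply HUW, Pe. rewrite Hiso. exact Hy.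
Qed.

(** * The metric on G ⋊ ℤ *)

Definition dS (G : Group) (dG : G -> G -> R) (p q : G * Z) : R :=
  dG (fst p) (fst q) + (if Z.eq_dec (snd p) (snd q) then 0 else 1).

Lemma dS_metric (G : Group) dG : is_metric G dG -> is_metric (G * Z) (dS G dG).
Proof.
  intros [H0 [Hz [Hs Ht]]]. unfold dS. split; [|split; [|split]].
  - intros [x m] [y n]; simpl. pose proof (H0 x y). destruct (Z.eq_dec m n); lra.
  - intros [x m] [y n]; simpl. split.
    + intros E. pose proof (H0 x y). destruct (Z.eq_dec m n); [|lra].
      subst. f_equal. apply Hz. lra.
    + intros E. injection E as -> ->. destruct (Z.eq_dec n n); [|congruence].
      rewrite (proj2 (Hz y y) eq_refl). lra.
  - intros [x m] [y n]; simpl. rewrite Hs.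
    destruct (Z.eq_dec m n), (Z.eq_dec n m); try lra; lia.
  - intros [x m] [y n] [z k]; simpl. pose proof (Ht x y z).
    pose proof (H0 x y). pose proof (H0 y z).
    destruct (Z.eq_dec m k), (Z.eq_dec m n), (Z.eq_dec n k); try lra; lia.
Qed.

Lemma dS_small (G : Group) dG (H0 : forall x y, 0 <= dG x y) p q :
  dS G dG p q < 1 -> snd p = snd q /\ dS G dG p q = dG (fst p) (fst q).
Proof.
  unfold dS. intros Hl. pose proof (H0 (fst p) (fst q)).
  destruct (Z.eq_dec (snd p) (snd q)); [split; [auto|lra]|lra].
Qed.

Section SemidirectMetric.

Variables (G : Group) (Hab : abelian G) (dG : G -> G -> R).
Hypothesis HG : metric_group G dG.

Let dG_nonneg : forall x y, 0 <= dG x y.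
Proof. apply HG. Qed.

Lemma sgn_continuous m x eps : 0 < eps -> exists del, 0 < del /\ forall x',
  dG x x' < del -> dG (sgn G m x) (sgn G m x') < eps.
Proof.
  intros Heps. unfold sgn. destruct (Z.odd m).
  - apply HG, Heps.
  - exists eps. auto.
Qed.

Lemma dS_metric_group : metric_group (SG G Hab) (dS G dG).
Proof.
  destruct HG as [Hm [Hmul Hinv]].
  split; [apply dS_metric, Hm|split].
  - intros [x m] [y n] eps Heps.
    destruct (Hmul x (sgn G m y) eps Heps) as [d1 [Hd1 P1]].
    destruct (sgn_continuous m y d1 Hd1) as [d2 [Hd2 P2]].
    set (del := Rmin (Rmin d1 d2) 1).
    assert (del_pos : 0 < del) by (apply Rmin_glb_lt; [apply Rmin_glb_lt|]; lra).
    assert (del_le : del <= d1 /\ del <= d2 /\ del <= 1).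
    { pose proof (Rmin_l (Rmin d1 d2) 1). pose proof (Rmin_r (Rmin d1 d2) 1).
      pose proof (Rmin_l d1 d2). pose proof (Rmin_r d1 d2). unfold del. lra. }
    exists del. split; [exact del_pos|].
    intros [x' m'] [y' n'] D1 D2.
    destruct (dS_small G dG dG_nonneg (x, m) (x', m')) as [E1 F1]; [lra|].
    destruct (dS_small G dG dG_nonneg (y, n) (y', n')) as [E2 F2]; [lra|].
    simpl in E1, F1, E2, F2. subst m' n'.
    unfold Smul, dS; simpl. destruct (Z.eq_dec (m + n) (m + n)); [|congruence].
    rewrite Rplus_0_r. apply P1; [lra|]. apply P2. lra.
  - intros [x m] eps Heps.
    destruct (sgn_continuous m (ginv x) eps Heps) as [d1 [Hd1 P1]].
    destruct (Hinv x d1 Hd1) as [d2 [Hd2 P2]].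
    exists (Rmin d2 1). split; [apply Rmin_glb_lt; lra|].
    pose proof (Rmin_l d2 1). pose proof (Rmin_r d2 1).
    intros [x' m'] D1.
    destruct (dS_small G dG dG_nonneg (x, m) (x', m')) as [E1 F1]; [lra|].
    simpl in E1, F1. subst m'.
    unfold Sinv, dS; simpl. destruct (Z.eq_dec (- m) (- m)); [|congruence].
    rewrite Rplus_0_r. apply P1, P2. lra.
Qed.

(* The invariant neighbourhoods {(x,0) | dG 1 x < e, dG 1 x^-1 < e}: conjugation
   maps (x,0) to (x,0) or (x^-1,0), and they are open by continuity of inversion. *)
Lemma SG_small_invariant_nbhds : small_invariant_nbhds (SG G Hab) (dS G dG).
Proof.
  destruct HG as [Hm [_ Hinv]].
  assert (Hd0 : forall x, dG x x = 0) by (intros; apply Hm; reflexivity).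
  destruct Hm as [_ [_ [_ Htr]]].
  intros eps Heps.
  set (e := Rmin eps 1).
  assert (e_le : e <= eps /\ e <= 1) by (split; [apply Rmin_l|apply Rmin_r]).
  assert (e_pos : 0 < e) by (apply Rmin_glb_lt; lra).
  exists (fun p : G * Z => snd p = 0%Z /\ dG gone (fst p) < e /\ dG gone (ginv (fst p)) < e).
  split; [|split; [|split]].
  - intros [x m] [Em [D1 D2]]; simpl in Em, D1, D2. subst m.
    destruct (Hinv x (e - dG gone (ginv x))) as [d1 [Hd1 P1]]; [lra|].
    set (del := Rmin (Rmin d1 1) (e - dG gone x)).
    assert (del_pos : 0 < del) by (apply Rmin_glb_lt; [apply Rmin_glb_lt|]; lra).
    assert (del_le : del <= d1 /\ del <= 1 /\ del <= e - dG gone x).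
    { pose proof (Rmin_l (Rmin d1 1) (e - dG gone x)).
      pose proof (Rmin_r (Rmin d1 1) (e - dG gone x)).
      pose proof (Rmin_l d1 1). pose proof (Rmin_r d1 1). unfold del. lra. }
    exists del. split; [exact del_pos|].
    intros [y n] Hy.
    destruct (dS_small G dG dG_nonneg (x, 0%Z) (y, n)) as [E1 F1]; [lra|].
    simpl in E1, F1 |- *. split; [auto|]. split.
    + pose proof (Htr gone x y). lra.
    + pose proof (Htr gone (ginv x) (ginv y)). pose proof (P1 y). lra.
  - simpl. rewrite inv1, Hd0. auto.
  - intros [x m] [Em [D1 _]]; simpl in Em, D1. unfold dS. simpl.
    rewrite Em. simpl. lra.
  - intros [z m] [x n] [En [D1 D2]]; simpl in En, D1, D2. subst n.
    rewrite SG_conj. simpl. unfold sgn. destruct (Z.odd m); [rewrite invK|]; auto.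
Qed.

End SemidirectMetric.

Theorem mainTheorem16 (G : Group) (opG : (G -> Prop) -> Prop)
  (HGab : abelian G) (HGtop : is_topological_group G opG)
  (HGmet : metrizable G opG)
  (H : Group) (iota : G -> H) (t : H)
  (HHNN : is_HNN_extension G H (fun x => ginv x) iota t) :
  exists opH : (H -> Prop) -> Prop,
    is_topological_group H opH /\ metrizable H opH /\ is_SIN_group H opH /\
    (forall x y : G, iota x = iota y -> x = y) /\
    (forall U : G -> Prop,
       opG U <-> exists W, opH W /\ forall x : G, U x <-> W (iota x)).
Proof.
  destruct HGmet as [dG [HdG HopG]].
  pose proof (metric_group_of_topological G opG dG HGtop HdG HopG) as HGmg.
  destruct (HNN_embedding G HGab H iota t HHNN) as [h [Hh [Hhi Hinj]]].
  set (dH := fun a b : H => dS G dG (h a) (h b)).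
  assert (HHmg : metric_group H dH).
  { apply (metric_group_pullback H (SG G HGab) h (dS G dG) Hh Hinj).
    apply dS_metric_group, HGmg. }
  assert (iota_isometry : forall x y, dH (iota x) (iota y) = dG x y).
  { intros x y. unfold dH, dS. rewrite !Hhi. simpl.
    destruct (Z.eq_dec 0 0); [lra|congruence]. }
  assert (iota_separated : forall x b, dH (iota x) b < 1 -> exists y, b = iota y).
  { intros x b Hb. destruct (dS_small G dG (proj1 HdG) _ _ Hb) as [E _].
    exists (fst (h b)). apply Hinj. rewrite Hhi, (surjective_pairing (h b)), <- E, Hhi.
    reflexivity. }
  exists (metric_open H dH). split; [|split; [|split; [|split]]].
  - apply metric_group_topological, HHmg.
  - exists dH. split; [apply HHmg|]. intros U. reflexivity.
  - apply SIN_of_small_invariant_nbhds.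
    apply (small_invariant_nbhds_pullback H (SG G HGab) h (dS G dG) Hh).
    apply SG_small_invariant_nbhds, HGmg.
  - intros x y E. apply (f_equal h) in E. rewrite !Hhi in E. congruence.
  - intros U. rewrite HopG.
    apply (isometric_embedding_subspace G H dG dH iota 1); auto; lra.
Qed.
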